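(* Let $f\in C(\mathbb{R};\mathbb{R})$ satisfy $f(0)=0$ and $xf(x)>0$ for all $x\neq 0$, and let $g\in C([0,\infty);\mathbb{R})$ with $g\in L^1(0,\infty)$. Then every continuous solution $x$ of \[ x'(t)=-f(x(t))+g(t),\quad t>0;\qquad x(0)=\xi\in\mathbb{R}, \] satisfies $\lim_{t\to\infty}x(t)=0$.
   Context: Solutions are understood to be global continuous solutions on $[0,\infty)$ (the sign condition on $f$ ensures no blow-up in finite time). *)

From Stdlib Require Import Reals Lra.
Open Scope R_scope.

Definition cont_on_nonneg (h : R -> R) : Prop :=
  forall t0, 0 <= t0 -> limit1_in h (fun t => 0 <= t) (h t0) t0.

(* g in L^1(0, +oo) for a continuous g: the Riemann integrals of |g| over
   [0, T] are bounded uniformly in T (equivalent to Lebesgue integrability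
   of a continuous function on (0, +oo)). *)
Definition L1_nonneg (g : R -> R) : Prop :=
  exists M : R, forall T : R, 0 <= T ->
    forall pr : Riemann_integrable (fun t => Rabs (g t)) 0 T,
      RiemannInt pr <= M.

Definition lim_at_infty (h : R -> R) (l : R) : Prop :=
  forall eps : R, 0 < eps -> exists T : R, forall t : R, T <= t -> Rabs (h t - l) < eps.

(* Let G(t) = \int_0^t |g|.  G is nondecreasing and bounded, hence its
   increments over [T0, oo) become arbitrarily small.  By the mean value
   theorem, on any interval [a, b] along which f(x) >= m we have the
   comparison  x(b) - x(a) <= G(b) - G(a) - m (b - a).
   One-sided decay (x eventually < eps) then follows in two steps:
   - recurrence: x cannot stay >= c > 0 forever, since then f(x) would be
     bounded below by a positive constant and the comparison forces x down;
   - trapping: once x dips below eps/2 after the time T0 where the tail of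
     G is < eps/2, at the last time s before t where x <= eps/2 the
     comparison with m = 0 gives x(t) < x(s) + eps/2 <= eps.
   The lower bound follows by applying the one-sided result to -x, which
   solves the reflected equation with f~(y) = - f(-y) and g~ = - g. *)

From Stdlib Require Import Reals Lra Classical.
From Coquelicot Require Import Coquelicot.
Open Scope R_scope.

Lemma Rmax0_lipschitz (s t : R) : Rabs (Rmax 0 s - Rmax 0 t) <= Rabs (s - t).
Proof.
  unfold Rmax; destruct (Rle_dec 0 s); destruct (Rle_dec 0 t);
  unfold Rabs; repeat destruct Rcase_abs; lra.
Qed.

Lemma clamped_continuous (g : R -> R) :
  cont_on_nonneg g -> forall t, continuity_pt (fun s => g (Rmax 0 s)) t.
Proof.
  intros Hg t eps Heps.
  destruct (Hg (Rmax 0 t) (Rmax_l _ _) eps Heps) as [d [Hd Hnear]].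
  exists d; split; [exact Hd|]. intros s [_ Hs].
  apply Hnear; split; [apply Rmax_l|].
  change (Rabs (Rmax 0 s - Rmax 0 t) < d).
  change (Rabs (s - t) < d) in Hs.
  pose proof (Rmax0_lipschitz s t); lra.
Qed.

Lemma abs_primitive_bounded (g : R -> R) :
  cont_on_nonneg g -> L1_nonneg g ->
  exists (G : R -> R) (M : R),
    (forall t, 0 < t -> derivable_pt_lim G t (Rabs (g t))) /\
    (forall t, 0 < t -> G t <= M).
Proof.
  intros Hg [M HM].
  set (h := fun s => Rabs (g (Rmax 0 s))).
  assert (h_cont : forall t, continuity_pt h t).
  { intro t. apply (continuity_pt_comp (fun s => g (Rmax 0 s)) Rabs).
    - apply clamped_continuous, Hg.
    - apply Rcontinuity_abs. }
  assert (h_int : forall a b, ex_RInt h a b).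
  { intros a b. apply (@ex_RInt_continuous R_CompleteNormedModule).
    intros z _. apply continuity_pt_filterlim, h_cont. }
  assert (h_eq : forall t, 0 <= t -> h t = Rabs (g t)).
  { intros t Ht. unfold h. now rewrite Rmax_right. }
  exists (fun t => RInt h 0 t), M. split.
  - intros t Ht. rewrite <- h_eq by lra.
    apply is_derive_Reals, (is_derive_RInt h (fun t => RInt h 0 t) 0 t).
    + apply filter_forall. intro b.
      apply (@RInt_correct R_CompleteNormedModule), h_int.
    + apply continuity_pt_filterlim, h_cont.
  - intros t Ht.
    pose proof (ex_RInt_Reals_0 _ _ _ (h_int 0 t)) as pr_h.
    rewrite (RInt_Reals _ _ _ pr_h).
    assert (Hext : forall y, Rmin 0 t <= y <= Rmax 0 t -> h y = Rabs (g y)).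
    { intros y Hy. rewrite Rmin_left in Hy by lra. apply h_eq. lra. }
    rewrite (RiemannInt_ext _ _ _ _ pr_h
               (Riemann_integrable_ext _ _ _ _ Hext pr_h) Hext).
    apply HM; lra.
Qed.

Lemma nondecreasing_bounded_tail (G : R -> R) (M : R) :
  (forall t, 0 < t -> G t <= M) ->
  forall eps, 0 < eps ->
  exists T0, 0 < T0 /\ forall t, T0 <= t -> G t - G T0 < eps.
Proof.
  intros HM eps Heps.
  set (E := fun y => exists t, 0 < t /\ y = G t).
  destruct (completeness E) as [L [L_ub L_least]].
  { exists M. intros y [t [Ht ->]]. now apply HM. }
  { exists (G 1), 1. split; lra. }
  destruct (classic (exists t0, 0 < t0 /\ L - eps < G t0))
    as [[t0 [Ht0 Hclose]] | Hfar].
  - exists t0. split; [exact Ht0|]. intros t Ht.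
    assert (G t <= L) by (apply L_ub; exists t; split; lra). lra.
  - exfalso.
    assert (L <= L - eps); [|lra].
    apply L_least. intros y [t [Ht ->]].
    apply Rnot_lt_le. intro Hlt. apply Hfar. now exists t.
Qed.

Lemma last_crossing (x : R -> R) (a b c : R) :
  a <= b -> (forall u, a <= u <= b -> continuity_pt x u) ->
  x a <= c -> c < x b ->
  exists s, a <= s < b /\ x s <= c /\ forall u, s < u <= b -> c < x u.
Proof.
  intros Hab Hx Ha Hb.
  set (E := fun s => a <= s <= b /\ x s <= c).
  destruct (completeness E) as [s [s_ub s_least]].
  { exists b. intros y [Hy _]. lra. }
  { exists a. split; lra. }
  assert (Has : a <= s) by (apply s_ub; split; lra).
  assert (Hsb : s <= b) by (apply s_least; intros y [Hy _]; lra).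
  assert (Hxs : x s <= c).
  { apply Rnot_lt_le. intro Hcs.
    destruct (Hx s (conj Has Hsb) (x s - c) ltac:(lra)) as [d [Hd Hnear]].
    assert (s <= s - d / 2); [|lra].
    apply s_least. intros y [Hy Hyc].
    assert (y <= s) by (apply s_ub; split; assumption).
    apply Rnot_lt_le. intro Hy_close.
    destruct (Req_dec y s) as [-> | Hne]; [lra|].
    assert (Hdist : R_dist (x y) (x s) < x s - c).
    { apply Hnear. split; [split; [exact I | auto]|].
      change (Rabs (y - s) < d). rewrite Rabs_left1; lra. }
    change (Rabs (x y - x s) < x s - c) in Hdist.
    rewrite Rabs_left1 in Hdist; lra. }
  exists s. split; [split; [exact Has|]|split; [exact Hxs|]].
  - destruct (Req_dec s b) as [-> | Hne]; lra.
  - intros u Hu. apply Rnot_le_lt. intro Hxu.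
    assert (u <= s) by (apply s_ub; split; lra). lra.
Qed.

Section OneSidedDecay.

Variables (f g x G : R -> R) (M : R).
Hypothesis f_cont : continuity f.
Hypothesis f_pos : forall y, 0 < y -> 0 < f y.
Hypothesis x_ode : forall t, 0 < t -> derivable_pt_lim x t (- f (x t) + g t).
Hypothesis G_deriv : forall t, 0 < t -> derivable_pt_lim G t (Rabs (g t)).
Hypothesis G_bound : forall t, 0 < t -> G t <= M.

Lemma G_nondecreasing (a b : R) : 0 < a -> a <= b -> G a <= G b.
Proof.
  intros Ha Hab.
  destruct (Req_dec a b) as [<- | Hne]; [lra|].
  destruct (MVT_cor2 G (fun t => Rabs (g t)) a b) as [c [Hc Hcab]]; [lra| |].
  { intros c Hc. apply G_deriv; lra. }
  assert (0 <= Rabs (g c) * (b - a)) by (apply Rmult_le_pos; [apply Rabs_pos | lra]).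
  lra.
Qed.

Lemma comparison (a b m : R) :
  0 < a -> a <= b -> (forall c, a < c < b -> m <= f (x c)) ->
  x b - x a <= G b - G a - m * (b - a).
Proof.
  intros Ha Hab Hm.
  destruct (Req_dec a b) as [<- | Hne]; [lra|].
  destruct (MVT_cor2 (fun t => x t - G t)
              (fun t => - f (x t) + g t - Rabs (g t)) a b) as [c [Hc Hcab]];
    [lra| |].
  { intros c Hc. apply derivable_pt_lim_minus; [apply x_ode | apply G_deriv]; lra. }
  pose proof (Hm c Hcab). pose proof (Rle_abs (g c)).
  assert ((- f (x c) + g c - Rabs (g c)) * (b - a) <= - m * (b - a))
    by (apply Rmult_le_compat_r; lra).
  lra.
Qed.

Lemma bounded_while_above (c T : R) :
  0 < c -> 0 < T -> (forall t, T <= t -> c <= x t) ->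
  forall t, T <= t -> x t <= x T + M - G T.
Proof.
  intros Hc HT Habove t Ht.
  assert (Hf : forall u, T < u < t -> 0 <= f (x u))
    by (intros u Hu; left; apply f_pos; pose proof (Habove u ltac:(lra)); lra).
  pose proof (comparison T t 0 HT Ht Hf).
  pose proof (G_bound t ltac:(lra)). lra.
Qed.

(* Recurrence: x returns below any level c > 0 after any time T > 0.
   Otherwise x stays in [c, K], where f(x) >= m > 0, and the comparison
   drives x below c within time (K - c)/m + 1. *)
Lemma recurrence (c T : R) :
  0 < c -> 0 < T -> exists t, T <= t /\ x t < c.
Proof.
  intros Hc HT. apply NNPP. intro Hnever.
  assert (Habove : forall t, T <= t -> c <= x t).
  { intros t Ht. apply Rnot_lt_le. intro Hlt. apply Hnever. now exists t. }
  set (K := x T + M - G T).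
  pose proof (bounded_while_above c T Hc HT Habove) as Hbelow.
  assert (HcK : c <= K).
  { pose proof (Hbelow T (Rle_refl T)). pose proof (Habove T (Rle_refl T)).
    unfold K in *; lra. }
  destruct (continuity_ab_min f c K HcK) as [y_min [Hmin Hy_min]].
  { intros y _. apply f_cont. }
  set (m := f y_min).
  assert (Hm : 0 < m) by (apply f_pos; lra).
  set (t := T + (K - c) / m + 1).
  assert (HTt : T <= t).
  { assert (0 <= (K - c) / m) by (apply Rdiv_le_0_compat; lra). unfold t; lra. }
  assert (Hf : forall u, T < u < t -> m <= f (x u))
    by (intros u Hu; apply Hmin; split; [apply Habove | apply Hbelow]; lra).
  pose proof (comparison T t m HT HTt Hf).
  pose proof (G_bound t ltac:(lra)).
  assert (m * (t - T) = K - c + m) by (unfold t; field; lra).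
  pose proof (Habove t HTt). unfold K in *. lra.
Qed.

Lemma eventually_below (eps : R) :
  0 < eps -> exists T, forall t, T <= t -> x t < eps.
Proof.
  intros Heps.
  destruct (nondecreasing_bounded_tail G M G_bound (eps / 2) ltac:(lra))
    as [T0 [HT0 Htail]].
  destruct (recurrence (eps / 2) T0 ltac:(lra) HT0) as [T1 [HT1 HxT1]].
  exists T1. intros t Ht.
  destruct (Rle_lt_dec (x t) (eps / 2)) as [Hlow | Hhigh]; [lra|].
  assert (x_cont : forall u, T1 <= u <= t -> continuity_pt x u)
    by (intros u Hu; apply derivable_continuous_pt;
        exists (- f (x u) + g u); apply x_ode; lra).
  destruct (last_crossing x T1 t (eps / 2) Ht x_cont ltac:(lra) Hhigh)
    as [s [Hs [Hxs Hafter]]].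
  assert (Hf : forall u, s < u < t -> 0 <= f (x u))
    by (intros u Hu; left; apply f_pos; pose proof (Hafter u ltac:(lra)); lra).
  pose proof (comparison s t 0 ltac:(lra) ltac:(lra) Hf).
  pose proof (G_nondecreasing T0 s HT0 ltac:(lra)).
  pose proof (Htail t ltac:(lra)).
  lra.
Qed.

End OneSidedDecay.

Lemma reflected_ode (f g x : R -> R) (t : R) :
  derivable_pt_lim x t (- f (x t) + g t) ->
  derivable_pt_lim (fun s => - x s) t
    (- (fun y => - f (- y)) ((fun s => - x s) t) + (fun s => - g s) t).
Proof.
  intro Hx. cbv beta.
  replace (- - f (- - x t) + - g t) with (- (- f (x t) + g t))
    by (rewrite !Ropp_involutive; ring).
  now apply (derivable_pt_lim_opp x).
Qed.

Theorem proposition1 (f g x : R -> R) (xi : R)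
  (Hf_cont : continuity f)
  (Hf0 : f 0 = 0)
  (Hf_sign : forall y : R, y <> 0 -> y * f y > 0)
  (Hg_cont : cont_on_nonneg g)
  (Hg_L1 : L1_nonneg g)
  (Hx_cont : cont_on_nonneg x)
  (Hx_ode : forall t : R, 0 < t -> derivable_pt_lim x t (- f (x t) + g t))
  (Hx0 : x 0 = xi) :
  lim_at_infty x 0.
Proof.
  destruct (abs_primitive_bounded g Hg_cont Hg_L1) as [G [M [HG HGM]]].
  intros eps Heps.
  destruct (eventually_below f g x G M Hf_cont) with (eps := eps)
    as [T1 Hupper]; auto.
  { intros y Hy. pose proof (Hf_sign y ltac:(lra)). nra. }
  destruct (eventually_below (fun y => - f (- y)) (fun s => - g s)
              (fun s => - x s) G M) with (eps := eps) as [T2 Hlower]; auto.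
  { intros y. apply continuity_opp, (continuity_comp Ropp f); [|exact Hf_cont].
    apply continuity_opp, derivable_continuous, derivable_id. }
  { intros y Hy. pose proof (Hf_sign (- y) ltac:(lra)). nra. }
  { intros t Ht. now apply reflected_ode, Hx_ode. }
  { intros t Ht. rewrite Rabs_Ropp. now apply HG. }
  exists (Rmax T1 T2). intros t Ht.
  pose proof (Hupper t ltac:(pose proof (Rmax_l T1 T2); lra)).
  pose proof (Hlower t ltac:(pose proof (Rmax_r T1 T2); lra)).
  rewrite Rminus_0_r. apply Rabs_def1; lra.
Qed.
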